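(* Let $\mathcal{G}_I$ be the class of all finite irreflexive graphs. (1) A class $\mathcal{C}\subseteq\mathcal{G}_I$ that is downward closed under the homomorphic image ordering is well quasi-ordered (under that ordering) if and only if it is finite. (2) For any finite set $\{O_1,\dots,O_k\}\subseteq\mathcal{G}_I$, the class $\mathrm{Av}(O_1,\dots,O_k)$, taken with respect to either the homomorphic image ordering or the strong homomorphic image ordering, is not well quasi-ordered (under the respective ordering).
   Context: An irreflexive graph is a set with a symmetric edge relation having no loops; homomorphisms map edges to edges (so an edge cannot be collapsed to a single vertex). A homomorphism $\phi$ is strong if additionally every edge of the target between vertices of the image is the image of an edge. Homomorphic image ordering: $A\preceq B$ iff there is a surjective homomorphism $B\to A$; strong homomorphic image ordering: iff there is a surjective strong homomorphism $B\to A$. For a set $B$ of structures, $\mathrm{Av}(B)=\{x\in\mathcal{G}_I : b\not\preceq x \text{ for all } b\in B\}$. Well quasi-ordered means no infinite strictly decreasing sequence and no infinite antichain; graphs are considered up to isomorphism (finite means finitely many isomorphism types). *)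

From mathcomp Require Import all_boot.
Set Implicit Arguments. Unset Strict Implicit. Unset Printing Implicit Defensive.

Record graph := Graph {
  gn : nat;
  gadj : rel 'I_gn;
  gsym : symmetric gadj;
  girr : irreflexive gadj }.

Definition is_hom (G H : graph) (f : 'I_(gn G) -> 'I_(gn H)) : Prop :=
  forall x y, gadj x y -> gadj (f x) (f y).

Definition is_strong (G H : graph) (f : 'I_(gn G) -> 'I_(gn H)) : Prop :=
  forall x y, gadj (f x) (f y) ->
    exists x' y', [/\ f x' = f x, f y' = f y & gadj x' y'].

Definition is_surj (G H : graph) (f : 'I_(gn G) -> 'I_(gn H)) : Prop :=
  forall v, exists u, f u = v.

Definition hle (A B : graph) : Prop :=
  exists f : 'I_(gn B) -> 'I_(gn A), is_hom f /\ is_surj f.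

Definition shle (A B : graph) : Prop :=
  exists f : 'I_(gn B) -> 'I_(gn A), [/\ is_hom f, is_strong f & is_surj f].

Definition graph_iso (G H : graph) : Prop :=
  exists f : 'I_(gn G) -> 'I_(gn H),
    bijective f /\ forall x y, gadj (f x) (f y) = gadj x y.

Definition graph_class := graph -> Prop.

Definition down_closed (le : graph -> graph -> Prop) (C : graph_class) : Prop :=
  forall A B, C B -> le A B -> C A.

Definition finite_class (C : graph_class) : Prop :=
  exists (n : nat) (s : nat -> graph),
    forall G, C G -> exists i, i < n /\ graph_iso G (s i).

Definition strictly_below (le : graph -> graph -> Prop) (A B : graph) : Prop :=
  le A B /\ ~ le B A.

Definition wqo (le : graph -> graph -> Prop) (C : graph_class) : Prop :=
  (~ exists s : nat -> graph,
       (forall n, C (s n)) /\ forall n, strictly_below le (s n.+1) (s n)) /\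
  (~ exists s : nat -> graph,
       (forall n, C (s n)) /\ forall i j, i <> j -> ~ le (s i) (s j)).

Definition Av (le : graph -> graph -> Prop) (k : nat) (O : 'I_k -> graph) : graph_class :=
  fun x => forall i, ~ le (O i) x.

(* A homomorphism out of the complete graph K_m is injective, so K_m is a
   homomorphic image of K_n only when m = n: the complete graphs form an
   infinite antichain.  Every graph G maps onto K_|G| (identity on vertices),
   so a downward closed class containing graphs of unbounded size contains
   infinitely many complete graphs, and a class of bounded size has only
   finitely many isomorphism types.  Conversely, in a class with n isomorphism
   types any n + 1 members contain two isomorphic ones, which is incompatible
   both with a strictly decreasing chain and with an antichain.  Finally, K_m
   is below no graph with fewer than m vertices, so all large complete graphs
   lie in Av(O_1, ..., O_k), for either ordering. *)

From Stdlib Require Import Classical ClassicalEpsilon.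
From mathcomp Require Import all_boot.
Set Implicit Arguments. Unset Strict Implicit.

Lemma hle_refl (A : graph) : hle A A.
Proof. by exists id; split=> // v; exists v. Qed.

Lemma hle_trans (A B C : graph) : hle A B -> hle B C -> hle A C.
Proof.
case=> f [homf surjf] [g [homg surjg]]; exists (f \o g); split.
- by move=> x y /homg /homf.
- by move=> v; case: (surjf v) => u <-; case: (surjg u) => w <-; exists w.
Qed.

Lemma shle_hle (A B : graph) : shle A B -> hle A B.
Proof. by case=> f [homf _ surjf]; exists f. Qed.

Lemma iso_hle (G H : graph) : graph_iso G H -> hle H G /\ hle G H.
Proof.
case=> f [[g fK gK] adjf]; split.
- by exists f; split=> [x y|v]; [rewrite adjf | exists (g v)].
- exists g; split=> [x y|v]; last by exists (f v).
  by rewrite -adjf !gK.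
Qed.

Lemma surj_card_le (A B : graph) (f : 'I_(gn B) -> 'I_(gn A)) :
  is_surj f -> gn A <= gn B.
Proof.
move=> surjf; rewrite -[gn A]card_ord -[gn B]card_ord.
apply: leq_trans (leq_image_card f _); apply: subset_leq_card.
by apply/subsetP => v _; case: (surjf v) => u <-; apply: codom_f.
Qed.

Section CompleteGraph.

Variable m : nat.

Lemma complete_adj_sym : symmetric (fun x y : 'I_m => x != y).
Proof. by move=> x y; rewrite eq_sym. Qed.

Lemma complete_adj_irr : irreflexive (fun x y : 'I_m => x != y).
Proof. by move=> x; rewrite eqxx. Qed.

Definition complete_graph : graph := Graph complete_adj_sym complete_adj_irr.

Lemma hle_complete_card (A : graph) : hle A complete_graph -> m <= gn A.
Proof.
case=> f [homf _]; rewrite -[m]card_ord -[gn A]card_ord; apply: (leq_card f).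
move=> x y fxy; apply/eqP/negPn/negP => /(homf x y).
by rewrite fxy (girr (f y)).
Qed.

End CompleteGraph.

Lemma hle_complete_eq (a b : nat) :
  hle (complete_graph a) (complete_graph b) -> a = b.
Proof.
move=> le_ab; apply/eqP; rewrite eqn_leq (hle_complete_card le_ab) andbT.
by case: le_ab => f [_ /surj_card_le].
Qed.

Lemma hle_complete_quotient (G : graph) : hle (complete_graph (gn G)) G.
Proof.
exists id; split=> [x y adj_xy /=|v]; last by exists v.
by apply: contraTneq adj_xy => ->; rewrite (girr y).
Qed.

Definition graph_code (N : nat) := {m : 'I_N & {ffun 'I_m -> {ffun 'I_m -> bool}}}.

Section GraphCode.

Variables (N : nat) (c : graph_code N).

Definition code_adj : rel 'I_(tag c) :=
  fun x y => [&& tagged c x y, tagged c y x & x != y].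

Lemma code_adj_sym : symmetric code_adj.
Proof. by move=> x y; rewrite /code_adj andbCA eq_sym. Qed.

Lemma code_adj_irr : irreflexive code_adj.
Proof. by move=> x; rewrite /code_adj eqxx !andbF. Qed.

Definition graph_of_code : graph := Graph code_adj_sym code_adj_irr.

End GraphCode.

Lemma finite_class_bounded (C : graph_class) (N : nat) :
  (forall G, C G -> gn G < N) -> finite_class C.
Proof.
move=> boundC; set codes := enum {: graph_code N}.
exists (size codes), (fun i => nth (complete_graph 0) (map (@graph_of_code N) codes) i).
move=> G /boundC ltGN.
pose c : graph_code N := existT _ (Ordinal ltGN) [ffun x => [ffun y => gadj x y]].
have c_codes : c \in codes by rewrite mem_enum.
exists (index c codes); split; first by rewrite index_mem.
rewrite (nth_map c) ?index_mem // nth_index //.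
exists id; split; first by exists id.
move=> x y; rewrite /= /code_adj /= !ffunE (gsym y x).
by case: (eqVneq x y) => [->|_]; rewrite ?girr ?andbT ?andbb.
Qed.

Lemma pigeonhole_nat (n : nat) (R : nat -> nat -> Prop) :
  (forall i, exists2 k, k < n & R i k) ->
  exists i j k, [/\ i < j, R i k & R j k].
Proof.
move=> hR.
have [h Rh] : exists h : 'I_n.+1 -> 'I_n, forall i : 'I_n.+1, R i (h i).
  apply: (choice (fun (i : 'I_n.+1) (k : 'I_n) => R i k)) => i.
  by case: (hR i) => k ltkn Rik; exists (Ordinal ltkn).
have : ~~ injectiveb h.
  by apply/injectiveP => /leq_card; rewrite !card_ord ltnn.
case/injectivePn => i [j neq_ij hij].
case: (ltngtP i j) => [lt_ij | lt_ji | /val_inj eq_ij].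
- by exists i, j, (h i); rewrite {2}hij.
- by exists j, i, (h i); rewrite {1}hij.
- by rewrite eq_ij eqxx in neq_ij.
Qed.

Lemma finite_class_hle_pair (C : graph_class) (s : nat -> graph) :
  finite_class C -> (forall i, C (s i)) -> exists i j, i < j /\ hle (s i) (s j).
Proof.
case=> n [t isoC] Cs.
have [|i [j [k [lt_ij iso_ik iso_jk]]]] :=
  @pigeonhole_nat n (fun i k => graph_iso (s i) (t k)).
  by move=> i; case: (isoC _ (Cs i)) => k [ltkn isok]; exists k.
exists i, j; split=> //.
exact: hle_trans (proj2 (iso_hle iso_ik)) (proj1 (iso_hle iso_jk)).
Qed.

Lemma wqo_finite_class (C : graph_class) : finite_class C -> wqo hle C.
Proof.
move=> finC; split.
- case=> s [Cs decr].
  have chain : {homo s : i j / i <= j >-> hle j i}.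
    apply: homo_leq => [A | B A D le_BA le_DB | i]; first exact: hle_refl.
      exact: hle_trans le_DB le_BA.
    by case: (decr i).
  have [i [j [lt_ij le_ij]]] := finite_class_hle_pair finC Cs.
  by case: (decr i) => _; apply; apply: hle_trans le_ij (chain _ _ lt_ij).
- case=> s [Cs anti].
  have [i [j [lt_ij le_ij]]] := finite_class_hle_pair finC Cs.
  by apply: (anti i j) le_ij => eq_ij; rewrite eq_ij ltnn in lt_ij.
Qed.

Lemma unbounded_injective_seq (P : nat -> Prop) :
  (forall N, exists2 m, N <= m & P m) ->
  exists f : nat -> nat, injective f /\ forall i, P (f i).
Proof.
move=> unbP.
have [g gP] : exists g : nat -> nat, forall N, N <= g N /\ P (g N).
  apply: (choice (fun N m => N <= m /\ P m)) => N.
  by case: (unbP N) => m; exists m.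
pose f i := iter i (fun m => g m.+1) (g 0).
have f_incr : {homo f : i j / i < j}.
  apply: homo_ltn => [y x z lt_xy lt_yz | i]; first exact: ltn_trans lt_xy lt_yz.
  exact: (gP _).1.
exists f; split; first exact: incn_inj (leq_mono f_incr).
by case=> [|i]; apply: (gP _).2.
Qed.

Lemma not_wqo_unbounded_complete (le : graph -> graph -> Prop) (C : graph_class) :
  (forall A B, le A B -> hle A B) ->
  (forall N, exists2 m, N <= m & C (complete_graph m)) -> ~ wqo le C.
Proof.
move=> le_hle /unbounded_injective_seq [f [f_inj Cf]] [_]; apply.
exists (fun i => complete_graph (f i)); split=> // i j neq_ij.
by move=> /le_hle /hle_complete_eq /f_inj.
Qed.

Lemma unbounded_complete_not_finite (C : graph_class) :
  down_closed hle C -> ~ finite_class C ->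
  forall N, exists2 m, N <= m & C (complete_graph m).
Proof.
move=> downC infC N; apply: NNPP => noK; apply/infC/(@finite_class_bounded _ N) => G CG.
rewrite ltnNge; apply/negP => leNG; apply: noK; exists (gn G) => //.
exact: downC CG (hle_complete_quotient G).
Qed.

Lemma Av_hle_complete (k : nat) (O : 'I_k -> graph) (m : nat) :
  \max_(i < k) gn (O i) < m -> Av hle O (complete_graph m).
Proof.
move=> ltOm i /hle_complete_card le_m_Oi.
by have := leq_ltn_trans (leq_bigmax i) ltOm; rewrite ltnNge le_m_Oi.
Qed.

Lemma Av_hle_shle (k : nat) (O : 'I_k -> graph) (G : graph) :
  Av hle O G -> Av shle O G.
Proof. by move=> AvG i /shle_hle; apply: AvG. Qed.

Theorem theorem3p1 :
  (forall C : graph_class, down_closed hle C -> (wqo hle C <-> finite_class C)) /\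
  (forall (k : nat) (O : 'I_k -> graph),
      ~ wqo hle (Av hle O) /\ ~ wqo shle (Av shle O)).
Proof.
split=> [C downC | k O].
  split=> [wqoC|]; last exact: wqo_finite_class.
  apply: NNPP => infC; apply: (not_wqo_unbounded_complete (le := hle)) wqoC => //.
  exact: unbounded_complete_not_finite.
have AvK N : exists2 m, N <= m & Av hle O (complete_graph m).
  exists (N + (\max_(i < k) gn (O i)).+1); first exact: leq_addr.
  by apply: Av_hle_complete; rewrite ltn_addl.
split; apply: not_wqo_unbounded_complete => //; first exact: shle_hle.
by move=> N; case: (AvK N) => m leNm /Av_hle_shle; exists m.
Qed.
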